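(* If $p=1/2$, then for every $t\ge0$, $$\mathbb{P}(X_t=O)=\sum_{x\in\mathcal{U}_0}\mathbb{P}(X_{t/2}=x)^2.$$
   Context: The simple exclusion process on $\mathbb{Z}$ with parameter $p\in(0,1)$: each site is occupied by at most one particle; each particle attempts to jump one site to the right at rate $p$ and one site to the left at rate $1-p$, an attempt succeeding iff the target site is empty. $O$ is the configuration with every negative site occupied and every non-negative site empty; $\mathcal{U}_0$ is the set of configurations in which the number of particles in $[0,\infty)$ is finite and equal to the number of holes in $(-\infty,0)$ (the set of states reachable from $O$). $\mathbb{P}$ is the law of the process started from $O$, $X_t$ the state at time $t$. *)

From Stdlib Require Import Reals Lra Lia ZArith List Bool.
Import ListNotations.
Open Scope R_scope.

(** Configurations of the exclusion process on Z: [eta z = true] iff site z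
    is occupied. *)
Definition config := Z -> bool.

Definition O_cfg : config := fun z => (z <? 0)%Z.

Fixpoint particles_right (eta : config) (N : nat) : nat :=
  match N with
  | O => 0%nat
  | S n => (particles_right eta n + (if eta (Z.of_nat n) then 1 else 0))%nat
  end.

Fixpoint holes_left (eta : config) (N : nat) : nat :=
  match N with
  | O => 0%nat
  | S n => (holes_left eta n + (if eta (- Z.of_nat n - 1)%Z then 0 else 1))%nat
  end.

Definition agrees_outside (eta : config) (N : nat) : Prop :=
  forall z : Z, (z < - Z.of_nat N \/ Z.of_nat N <= z)%Z -> eta z = O_cfg z.

(** U_0: finitely many particles in [0,oo), finitely many holes in (-oo,0),
    and these two numbers are equal.  (Both finite <=> eta agrees with O
    outside some finite window [-N,N); the counts are then the window counts.) *)
Definition in_U0 (eta : config) : Prop :=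
  exists N : nat, agrees_outside eta N /\ particles_right eta N = holes_left eta N.

(** Rate at which the pair of sites (z, z+1) gets exchanged: a particle at z
    jumps right to an empty z+1 at rate p, a particle at z+1 jumps left to an
    empty z at rate 1-p. *)
Definition pair_rate (p : R) (eta : config) (z : Z) : R :=
  match eta z, eta (z + 1)%Z with
  | true, false => p
  | false, true => 1 - p
  | _, _ => 0
  end.

Definition swap (eta : config) (z : Z) : config :=
  fun w => if (w =? z)%Z then eta (z + 1)%Z
           else if (w =? z + 1)%Z then eta z else eta w.

Definition sum_window (N : nat) (f : Z -> R) : R :=
  fold_right Rplus 0
    (map (fun k => f (Z.of_nat k - Z.of_nat N - 1)%Z) (seq 0 (2 * N + 2))).

(** Right-hand side of the Kolmogorov forward equation at state x, for any
    N with x agreeing with O outside [-N,N) (all pairs (z,z+1) with z outside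
    [-N-1,N] have rate 0 for x and for every swap of x). *)
Definition forward_rhs (p : R) (P : R -> config -> R) (t : R) (x : config)
  (N : nat) : R :=
  sum_window N (fun z =>
    pair_rate p (swap x z) z * P t (swap x z) - pair_rate p x z * P t x).

Fixpoint all_bool_lists (n : nat) : list (list bool) :=
  match n with
  | O => [nil]
  | S m => flat_map (fun l => [true :: l; false :: l]) (all_bool_lists m)
  end.

Definition cfg_of (N : nat) (l : list bool) : config :=
  fun z => if ((- Z.of_nat N <=? z) && (z <? Z.of_nat N))%Z
           then nth (Z.to_nat (z + Z.of_nat N)) l false
           else O_cfg z.

Definition window_configs (N : nat) : list (list bool) :=
  filter (fun l => Nat.eqb (particles_right (cfg_of N l) N)
                           (holes_left (cfg_of N l) N))
         (all_bool_lists (2 * N)).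

(** partial sums of sum_{x in U_0} g x; for nonnegative g they increase to
    the value of the series *)
Definition U0_partial_sum (N : nat) (g : config -> R) : R :=
  fold_right Rplus 0 (map (fun l => g (cfg_of N l)) (window_configs N)).

(** [P t x] = P(X_t = x) for the exclusion process with parameter p started
    from O, characterised as the (unique, since the chain on U_0 is
    non-explosive) honest nonnegative solution of the Kolmogorov forward
    equations with initial condition delta_O. *)
Definition exclusion_marginals_from_O (p : R) (P : R -> config -> R) : Prop :=
  P 0 O_cfg = 1 /\
  (forall x, in_U0 x -> x <> O_cfg -> P 0 x = 0) /\
  (forall t x, 0 <= t -> in_U0 x -> 0 <= P t x) /\
  (forall t, 0 <= t -> Un_cv (fun N => U0_partial_sum N (P t)) 1) /\
  (forall x, in_U0 x -> forall eps, 0 < eps ->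
      exists delta, 0 < delta /\
        forall s, 0 <= s < delta -> Rabs (P s x - P 0 x) < eps) /\
  (forall x N, in_U0 x -> agrees_outside x N -> forall t, 0 < t ->
      derivable_pt_lim (fun s => P s x) t (forward_rhs p P t x N)).

(* For p = 1/2 each exchange (z, z+1) occurs at the same rate as its reverse, so the
   generator is symmetric for counting measure on U_0.  Truncate the overlap
   F(s) = sum_x P(X_s = x) P(X_(t-s) = x) to the configurations of U_0 supported in
   [-N, N).  By the forward equation, F'(s) is a sum over bonds; re-indexing x by its
   swap at an interior bond turns that bond's term into its own negative, so only
   bonds at the edge of the window survive, and their terms are bounded by the mass
   that P_s and P_(t-s) put outside the window.  That mass tends to 0 uniformly on
   [0, t] (Dini), so by the mean value theorem F_N(t/2) - F_N(0) -> 0, while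
   F_N(0) = P(X_t = O) and F_N(t/2) is the N-th partial sum of the series. *)

From Stdlib Require Import Reals Lra Lia ZArith List Bool Permutation FinFun
  FunctionalExtensionality IndefiniteDescription.
Import ListNotations.
Open Scope R_scope.

Definition sumR {A : Type} (f : A -> R) (L : list A) : R := fold_right Rplus 0 (map f L).

Lemma sumR_nil {A} (f : A -> R) : sumR f [] = 0.
Proof. reflexivity. Qed.

Lemma sumR_cons {A} (f : A -> R) a L : sumR f (a :: L) = f a + sumR f L.
Proof. reflexivity. Qed.

Lemma sumR_const0 {A} (L : list A) : sumR (fun _ => 0) L = 0.
Proof. induction L as [|x L IH]; [reflexivity|]. rewrite sumR_cons, IH. ring. Qed.

Lemma sumR_app {A} (f : A -> R) L1 L2 : sumR f (L1 ++ L2) = sumR f L1 + sumR f L2.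
Proof.
  induction L1 as [|a L1 IH]; [cbn [app]; rewrite sumR_nil; ring|].
  rewrite <- app_comm_cons, !sumR_cons, IH. ring.
Qed.

Lemma sumR_map {A B} (f : A -> R) (h : B -> A) (L : list B) :
  sumR f (map h L) = sumR (fun b => f (h b)) L.
Proof. unfold sumR. now rewrite map_map. Qed.

Lemma sumR_ext {A} (f g : A -> R) L : (forall a, In a L -> f a = g a) -> sumR f L = sumR g L.
Proof. intros H. unfold sumR. now rewrite (map_ext_in f g L H). Qed.

Lemma sumR_perm {A} (f : A -> R) L L' : Permutation L L' -> sumR f L = sumR f L'.
Proof. induction 1; unfold sumR in *; cbn in *; lra. Qed.

Lemma sumR_linear {A} (f g : A -> R) a b L :
  sumR (fun x => a * f x + b * g x) L = a * sumR f L + b * sumR g L.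
Proof. induction L as [|x L IH]; [rewrite !sumR_nil; ring|]. rewrite !sumR_cons, IH. ring. Qed.

Lemma sumR_opp {A} (f : A -> R) L : sumR (fun a => - f a) L = - sumR f L.
Proof. induction L as [|x L IH]; [rewrite !sumR_nil; ring|]. rewrite !sumR_cons, IH. ring. Qed.

Lemma sumR_exchange {A B} (h : A -> B -> R) (L : list A) (M : list B) :
  sumR (fun a => sumR (h a) M) L = sumR (fun b => sumR (fun a => h a b) L) M.
Proof.
  induction L as [|a L IH]; [symmetry; apply sumR_const0|].
  rewrite sumR_cons, IH.
  transitivity (sumR (fun b => 1 * h a b + 1 * sumR (fun a => h a b) L) M).
  - rewrite sumR_linear. ring.
  - apply sumR_ext. intros b _. rewrite sumR_cons. ring.
Qed.

Lemma sumR_le {A} (f g : A -> R) L : (forall a, In a L -> f a <= g a) -> sumR f L <= sumR g L.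
Proof.
  induction L as [|x L IH]; intros H; [apply Rle_refl|]. rewrite !sumR_cons.
  apply Rplus_le_compat; [apply H; left|apply IH; intros; apply H; right]; auto.
Qed.

Lemma sumR_abs_le {A} (f : A -> R) L : Rabs (sumR f L) <= sumR (fun a => Rabs (f a)) L.
Proof.
  induction L as [|x L IH]; [rewrite !sumR_nil, Rabs_R0; apply Rle_refl|].
  rewrite !sumR_cons. eapply Rle_trans; [apply Rabs_triang|lra].
Qed.

Lemma sumR_filter {A} (pr : A -> bool) (f : A -> R) L :
  sumR (fun a => if pr a then f a else 0) L = sumR f (filter pr L).
Proof.
  induction L as [|x L IH]; [reflexivity|]. cbn [filter]. rewrite sumR_cons, IH.
  destruct (pr x); [reflexivity|ring].
Qed.

Lemma sumR_incl_le {A} (f : A -> R) L L' :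
  NoDup L -> incl L L' -> (forall a, In a L' -> 0 <= f a) -> sumR f L <= sumR f L'.
Proof.
  revert L'; induction L as [|a L IH]; intros L' ND Inc Hpos.
  - rewrite sumR_nil, <- (sumR_const0 L'). apply sumR_le. auto.
  - apply NoDup_cons_iff in ND as [Ha ND].
    destruct (in_split a L') as [L1 [L2 ->]]; [apply Inc; left; auto|].
    rewrite sumR_cons, !sumR_app, sumR_cons.
    enough (sumR f L <= sumR f (L1 ++ L2)) by (rewrite sumR_app in *; lra).
    apply IH; auto.
    + intros b Hb. specialize (Inc b (or_intror Hb)). rewrite in_app_iff in *.
      destruct Inc as [?|[->|?]]; tauto.
    + intros b Hb. apply Hpos. rewrite in_app_iff in *. cbn. tauto.
Qed.

Lemma sumR_single {A} (f : A -> R) L a0 :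
  NoDup L -> In a0 L -> (forall a, In a L -> a <> a0 -> f a = 0) -> sumR f L = f a0.
Proof.
  intros ND Hin H0. destruct (in_split a0 L Hin) as [L1 [L2 ->]].
  pose proof (NoDup_remove_2 _ _ _ ND) as Hout.
  rewrite sumR_app, sumR_cons.
  rewrite (sumR_ext f (fun _ => 0) L1), (sumR_ext f (fun _ => 0) L2), !sumR_const0; [ring| |];
    intros a Ha; apply H0; rewrite ?in_app_iff; cbn; try tauto;
    intros ->; apply Hout; rewrite in_app_iff; tauto.
Qed.

Lemma sumR_involution {A} (f : A -> R) (sigma : A -> A) L :
  NoDup L -> (forall a, sigma (sigma a) = a) -> (forall a, In a L -> In (sigma a) L) ->
  sumR (fun a => f (sigma a)) L = sumR f L.
Proof.
  intros ND Hinv Hin. rewrite <- sumR_map. apply sumR_perm.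
  apply NoDup_Permutation.
  - apply Injective_map_NoDup; auto. intros a b E. rewrite <- (Hinv a), E. apply Hinv.
  - exact ND.
  - intros a. rewrite in_map_iff. split.
    + intros [b [<- Hb]]. auto.
    + intros Ha. exists (sigma a). auto.
Qed.

Lemma sumR_derivable {A} (f : A -> R -> R) (df : A -> R) L s :
  (forall a, In a L -> derivable_pt_lim (f a) s (df a)) ->
  derivable_pt_lim (fun s => sumR (fun a => f a s) L) s (sumR df L).
Proof.
  induction L as [|a L IH]; intros H; [apply derivable_pt_lim_const|].
  apply (derivable_pt_lim_plus (f a) (fun s => sumR (fun a => f a s) L)).
  - apply H. left. reflexivity.
  - apply IH. intros b Hb. apply H. right. exact Hb.
Qed.

Lemma continue_in_subdomain f (D D' : R -> Prop) y :
  (forall v, D' v -> D v) -> continue_in f D y -> continue_in f D' y.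
Proof.
  intros HD Hf eps Heps. destruct (Hf eps Heps) as [alp [Halp H]].
  exists alp. split; [exact Halp|]. intros v [[Hv Hne] Hd]. apply H. repeat split; auto.
Qed.

Lemma continue_in_sumR {A} (f : A -> R -> R) D L y :
  (forall a, In a L -> continue_in (f a) D y) ->
  continue_in (fun s => sumR (fun a => f a s) L) D y.
Proof.
  induction L as [|a L IH]; intros H.
  - intros eps Heps. exists 1. split; [lra|]. intros v _. rewrite R_dist_eq. exact Heps.
  - apply (limit_plus (f a) (fun s => sumR (fun a => f a s) L)).
    + apply H. left. reflexivity.
    + apply IH. intros b Hb. apply H. right. exact Hb.
Qed.

(* Borel-Lebesgue on [a, b]: locally eventual properties are uniformly eventual. *)
Lemma compact_interval_eventually (Q : nat -> R -> Prop) a b :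
  (forall y, a <= y <= b -> exists (n : nat) (delta : R), 0 < delta /\
     forall m v, (n <= m)%nat -> a <= v <= b -> Rabs (v - y) < delta -> Q m v) ->
  exists n0, forall m v, (n0 <= m)%nat -> a <= v <= b -> Q m v.
Proof.
  intros Hloc.
  assert (Hex : forall y, exists p : nat * R, 0 < snd p /\ (a <= y <= b ->
     forall m v, (fst p <= m)%nat -> a <= v <= b -> Rabs (v - y) < snd p -> Q m v)).
  { intros y. destruct (Rle_dec a y), (Rle_dec y b).
    1: destruct (Hloc y (conj r r0)) as (n & delta & Hd & H); exists (n, delta); auto.
    all: exists (0%nat, 1); split; [cbn; lra|intros; lra]. }
  destruct (functional_choice _ Hex) as [pf Hpf].
  set (ball y v := a <= y <= b /\ Rabs (v - y) < snd (pf y)).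
  assert (Hball : forall y, (exists v, ball y v) -> a <= y <= b) by (intros y [v [H _]]; exact H).
  destruct (compact_P3 a b (mkfamily (fun y => a <= y <= b) ball Hball)) as [Dom [Hcov [l Hl]]].
  { split.
    - intros v Hv. exists v. split; [exact Hv|]. rewrite Rminus_diag, Rabs_R0. apply Hpf.
    - intros y v [Hy Hv]. assert (Hr : 0 < snd (pf y) - Rabs (v - y)) by lra.
      exists (mkposreal _ Hr). intros w Hw. unfold disc in Hw. cbn in Hw. split; [exact Hy|].
      pose proof (Rabs_triang (w - v) (v - y)). replace (w - v + (v - y)) with (w - y) in * by ring.
      lra. }
  exists (fold_right Nat.max 0%nat (map (fun y => fst (pf y)) l)).
  intros m v Hm Hv. destruct (Hcov v Hv) as [y [[Hy Hvy] HDy]].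
  apply (proj2 (Hpf y) Hy); auto.
  eapply Nat.le_trans; [|exact Hm]. assert (Hin : In y l) by (apply Hl; split; auto).
  clear -Hin. induction l as [|c l IH]; [destruct Hin|].
  destruct Hin as [->|Hin]; cbn; [lia|]. specialize (IH Hin). lia.
Qed.

Lemma dini_uniform (E : nat -> R -> R) a b :
  (forall n u, a <= u <= b -> E (S n) u <= E n u) ->
  (forall u, a <= u <= b -> Un_cv (fun n => E n u) 0) ->
  (forall n y, a <= y <= b -> continue_in (E n) (fun v => a <= v <= b) y) ->
  forall eps, 0 < eps -> exists n0, forall n u, (n0 <= n)%nat -> a <= u <= b -> E n u < eps.
Proof.
  intros Hmono Hcv Hcont eps Heps.
  assert (Hmono' : forall n m u, (n <= m)%nat -> a <= u <= b -> E m u <= E n u).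
  { intros n m u Hnm Hu. induction Hnm as [|m Hnm IH]; [lra|]. specialize (Hmono m u Hu). lra. }
  apply compact_interval_eventually. intros y Hy.
  destruct (Hcv y Hy (eps / 2)) as [n Hn]; [lra|].
  specialize (Hn n (le_n _)). unfold R_dist in Hn. rewrite Rminus_0_r in Hn.
  destruct (Hcont n y Hy (eps / 2)) as [delta [Hdelta Hnear]]; [lra|].
  exists n, delta. split; [exact Hdelta|]. intros m v Hm Hv Hvy.
  apply Rle_lt_trans with (E n v); [apply Hmono'; assumption|].
  destruct (Req_dec y v) as [<-|Hne].
  - pose proof (Rle_abs (E n y)). lra.
  - specialize (Hnear v (conj (conj Hv Hne) Hvy)). cbn in Hnear. unfold R_dist in Hnear.
    pose proof (Rle_abs (E n y)). pose proof (Rle_abs (E n v - E n y)). lra.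
Qed.

Lemma all_bool_lists_In n l : In l (all_bool_lists n) <-> length l = n.
Proof.
  revert l; induction n as [|n IH]; intros l; cbn.
  - split; [intros [<-|[]]; reflexivity|destruct l; cbn; [auto|lia]].
  - rewrite in_flat_map. split.
    + intros [m [Hm Hl]]. apply IH in Hm. destruct Hl as [<-|[<-|[]]]; cbn; lia.
    + destruct l as [|b m]; cbn; [lia|]. intros H. exists m.
      split; [apply IH; lia|]. destruct b; cbn; auto.
Qed.

Lemma all_bool_lists_NoDup n : NoDup (all_bool_lists n).
Proof.
  induction n as [|n IH]; cbn; [repeat constructor; auto|].
  induction IH as [|l L Hl _ IHL]; cbn; [constructor|].
  assert (Hnew : forall b, ~ In (b :: l) (flat_map (fun l => [true :: l; false :: l]) L)).
  { intros b H. apply in_flat_map in H as [m [Hm Hin]].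
    destruct Hin as [E|[E|[]]]; injection E as _ ->; contradiction. }
  constructor; [intros [E|H]; [discriminate|exact (Hnew _ H)]|].
  constructor; [exact (Hnew _)|exact IHL].
Qed.

(* Inverse of [cfg_of N] on configurations agreeing with [O_cfg] outside [-N, N). *)
Definition code (N : nat) (x : config) : list bool :=
  map (fun k => x (Z.of_nat k - Z.of_nat N)%Z) (seq 0 (2 * N)).

Lemma code_length N x : length (code N x) = (2 * N)%nat.
Proof. unfold code. now rewrite length_map, length_seq. Qed.

Lemma nth_code N x k :
  (k < 2 * N)%nat -> nth k (code N x) false = x (Z.of_nat k - Z.of_nat N)%Z.
Proof.
  intros Hk. unfold code. set (f := fun k : nat => x (Z.of_nat k - Z.of_nat N)%Z).
  rewrite (nth_indep _ false (f 0%nat)) by (rewrite length_map, length_seq; lia).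
  rewrite map_nth, seq_nth by lia. reflexivity.
Qed.

Lemma code_cfg_of N l : length l = (2 * N)%nat -> code N (cfg_of N l) = l.
Proof.
  intros Hl. apply nth_ext with (d := false) (d' := false); rewrite code_length; [lia|].
  intros k Hk. rewrite nth_code by lia. unfold cfg_of.
  replace ((- Z.of_nat N <=? Z.of_nat k - Z.of_nat N) && (Z.of_nat k - Z.of_nat N <? Z.of_nat N))%Z
    with true by (symmetry; apply andb_true_iff; split; [apply Z.leb_le|apply Z.ltb_lt]; lia).
  f_equal. lia.
Qed.

Lemma cfg_of_code N x : agrees_outside x N -> cfg_of N (code N x) = x.
Proof.
  intros H. apply functional_extensionality. intros z. unfold cfg_of.
  destruct ((- Z.of_nat N <=? z) && (z <? Z.of_nat N))%Z eqn:E.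
  - apply andb_true_iff in E as [E1%Z.leb_le E2%Z.ltb_lt].
    rewrite nth_code by lia. f_equal. lia.
  - symmetry. apply H. apply andb_false_iff in E as [E%Z.leb_gt|E%Z.ltb_ge]; lia.
Qed.

Lemma cfg_of_agrees N l : agrees_outside (cfg_of N l) N.
Proof.
  intros z Hz. unfold cfg_of.
  replace ((- Z.of_nat N <=? z) && (z <? Z.of_nat N))%Z with false; [reflexivity|].
  symmetry. apply andb_false_iff. destruct Hz; [left; apply Z.leb_gt|right; apply Z.ltb_ge]; lia.
Qed.

Lemma agrees_outside_mono x N M : (N <= M)%nat -> agrees_outside x N -> agrees_outside x M.
Proof. intros H A z Hz. apply A. lia. Qed.

Lemma particles_holes_stable x N M : (N <= M)%nat -> agrees_outside x N ->
  particles_right x M = particles_right x N /\ holes_left x M = holes_left x N.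
Proof.
  intros HM A. induction HM as [|M HM [IHp IHh]]; [auto|]. cbn. rewrite IHp, IHh.
  rewrite (A (Z.of_nat M)), (A (- Z.of_nat M - 1)%Z) by lia. unfold O_cfg.
  replace (Z.of_nat M <? 0)%Z with false by (symmetry; apply Z.ltb_ge; lia).
  replace (- Z.of_nat M - 1 <? 0)%Z with true by (symmetry; apply Z.ltb_lt; lia).
  split; lia.
Qed.

Lemma in_U0_window x N :
  agrees_outside x N -> (in_U0 x <-> particles_right x N = holes_left x N).
Proof.
  intros A. split; [|intros E; exists N; auto].
  intros [M [AM E]].
  destruct (particles_holes_stable x N (Nat.max N M)) as [E1 E2]; [lia|exact A|].
  destruct (particles_holes_stable x M (Nat.max N M)) as [E3 E4]; [lia|exact AM|].
  lia.
Qed.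

Definition window_list (N : nat) : list config := map (cfg_of N) (window_configs N).

Lemma U0_partial_sum_window N (g : config -> R) :
  U0_partial_sum N g = sumR g (window_list N).
Proof. unfold window_list. now rewrite sumR_map. Qed.

Lemma In_window_list N x : In x (window_list N) <-> agrees_outside x N /\ in_U0 x.
Proof.
  unfold window_list, window_configs. rewrite in_map_iff. split.
  - intros [l [<- Hl]]. apply filter_In in Hl as [_ E%Nat.eqb_eq].
    split; [apply cfg_of_agrees|exists N; split; [apply cfg_of_agrees|exact E]].
  - intros [A U]. exists (code N x). rewrite cfg_of_code by exact A.
    split; [reflexivity|]. apply filter_In.
    rewrite all_bool_lists_In, code_length, cfg_of_code by exact A.
    split; [reflexivity|]. apply Nat.eqb_eq, in_U0_window; assumption.
Qed.

Lemma window_list_NoDup N : NoDup (window_list N).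
Proof.
  apply Injective_map_NoDup_in; [|apply NoDup_filter, all_bool_lists_NoDup].
  intros a b Ha Hb E. apply filter_In in Ha as [Ha%all_bool_lists_In _].
  apply filter_In in Hb as [Hb%all_bool_lists_In _].
  now rewrite <- (code_cfg_of N a), <- (code_cfg_of N b), E.
Qed.

Lemma window_list_incl N : incl (window_list N) (window_list (S N)).
Proof.
  intros x. rewrite !In_window_list. intros [A U]. split; [|exact U].
  apply (agrees_outside_mono x N); [lia|exact A].
Qed.

Lemma O_in_window_list N : In O_cfg (window_list N).
Proof.
  apply In_window_list. split; [intros z _; reflexivity|].
  exists 0%nat. split; [intros z _|]; reflexivity.
Qed.

Lemma swap_other x z w : w <> z -> w <> (z + 1)%Z -> swap x z w = x w.
Proof.
  intros H1 H2. unfold swap.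
  destruct (Z.eqb_spec w z); [lia|]. destruct (Z.eqb_spec w (z + 1)); [lia|]. reflexivity.
Qed.

Lemma swap_left x z : swap x z z = x (z + 1)%Z.
Proof. unfold swap. now rewrite Z.eqb_refl. Qed.

Lemma swap_right x z : swap x z (z + 1)%Z = x z.
Proof. unfold swap. destruct (Z.eqb_spec (z + 1) z); [lia|]. now rewrite Z.eqb_refl. Qed.

Lemma swap_involutive x z : swap (swap x z) z = x.
Proof.
  apply functional_extensionality. intros w.
  destruct (Z.eq_dec w z) as [->|H1]; [now rewrite swap_left, swap_right|].
  destruct (Z.eq_dec w (z + 1)) as [->|H2]; [now rewrite swap_right, swap_left|].
  now rewrite !swap_other.
Qed.

Lemma code_S N x :
  code (S N) x = [x (- Z.of_nat N - 1)%Z] ++ code N x ++ [x (Z.of_nat N)].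
Proof.
  unfold code. cbn [app]. replace (2 * S N)%nat with (S (S (2 * N))) by lia.
  rewrite <- cons_seq, seq_S, <- seq_shift, map_cons, map_app, map_map. cbn [map].
  f_equal; [f_equal; lia|]. f_equal.
  - apply map_ext. intros k. f_equal. lia.
  - do 2 f_equal. lia.
Qed.

(* For [x] agreeing with [O_cfg] outside [-N, N), this says that [x] is in U_0 iff the
   window holds exactly [N] particles. *)
Lemma count_code x N :
  (count_occ bool_dec (code N x) true + holes_left x N = particles_right x N + N)%nat.
Proof.
  induction N as [|N IH]; [reflexivity|].
  rewrite code_S, !count_occ_app. cbn [particles_right holes_left].
  remember (count_occ bool_dec (code N x) true) as c.
  destruct (x (- Z.of_nat N - 1)%Z), (x (Z.of_nat N)); cbn; lia.
Qed.

Lemma map_seq_transpose {A} (f g : nat -> A) n i :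
  (S i < n)%nat -> f i = g (S i) -> f (S i) = g i ->
  (forall k, k <> i -> k <> S i -> f k = g k) ->
  Permutation (map f (seq 0 n)) (map g (seq 0 n)).
Proof.
  intros Hn Hi HSi Hk. replace n with (i + S (S (n - S (S i))))%nat by lia.
  rewrite !seq_app, !map_app. cbn [seq map Nat.add]. rewrite Hi, HSi.
  apply Permutation_app; [erewrite map_ext_in; [reflexivity|]|].
  - intros k Hk'%in_seq. apply Hk; lia.
  - erewrite (map_ext_in f g (seq (S (S i)) _)); [apply perm_swap|].
    intros k Hk'%in_seq. apply Hk; lia.
Qed.

Lemma code_swap_perm N x z : (- Z.of_nat N <= z <= Z.of_nat N - 2)%Z ->
  Permutation (code N (swap x z)) (code N x).
Proof.
  intros Hz. unfold code.
  apply (map_seq_transpose _ _ _ (Z.to_nat (z + Z.of_nat N))); [lia| | |].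
  - replace (Z.of_nat (S _) - Z.of_nat N)%Z with (z + 1)%Z by lia.
    rewrite <- (swap_left x z). f_equal. lia.
  - replace (Z.of_nat (Z.to_nat _) - Z.of_nat N)%Z with z by lia.
    rewrite <- (swap_right x z). f_equal. lia.
  - intros k H1 H2. apply swap_other; lia.
Qed.

Lemma swap_in_window N x z : (- Z.of_nat N <= z <= Z.of_nat N - 2)%Z ->
  In x (window_list N) -> In (swap x z) (window_list N).
Proof.
  intros Hz. rewrite !In_window_list. intros [A U].
  assert (A' : agrees_outside (swap x z) N) by (intros w Hw; rewrite swap_other by lia; auto).
  split; [exact A'|]. apply (in_U0_window _ N A'). apply (in_U0_window _ N A) in U.
  pose proof (count_code x N). pose proof (count_code (swap x z) N).
  rewrite (proj1 (Permutation_count_occ bool_dec _ _) (code_swap_perm N x z Hz) true) in *.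
  lia.
Qed.

Definition exchangeable (x : config) (z : Z) : bool := xorb (x z) (x (z + 1)%Z).

Lemma pair_rate_half x z : pair_rate (1/2) x z = if exchangeable x z then 1/2 else 0.
Proof. unfold pair_rate, exchangeable. destruct (x z), (x (z + 1)%Z); cbn; lra. Qed.

Lemma exchangeable_swap x z : exchangeable (swap x z) z = exchangeable x z.
Proof. unfold exchangeable. rewrite swap_left, swap_right. now destruct (x z), (x (z + 1)%Z). Qed.

Lemma pair_rate_half_swap x z : pair_rate (1/2) (swap x z) z = pair_rate (1/2) x z.
Proof. now rewrite !pair_rate_half, exchangeable_swap. Qed.

Lemma forward_rhs_half P s x N : forward_rhs (1/2) P s x N =
  sum_window N (fun z => pair_rate (1/2) x z * (P s (swap x z) - P s x)).
Proof.
  unfold forward_rhs, sum_window. f_equal. apply map_ext. intros k.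
  rewrite pair_rate_half_swap. ring.
Qed.

Lemma sum_window_sumR N (f : Z -> R) :
  sum_window N f = sumR (fun k => f (Z.of_nat k - Z.of_nat N - 1)%Z) (seq 0 (2 * N + 2)).
Proof. reflexivity. Qed.

Lemma sum_window_boundary N (f : Z -> R) : (1 <= N)%nat ->
  (forall z, (- Z.of_nat N <= z <= Z.of_nat N - 2)%Z -> f z = 0) ->
  sum_window N f = f (- Z.of_nat N - 1)%Z + f (Z.of_nat N - 1)%Z + f (Z.of_nat N).
Proof.
  intros HN Hin. rewrite sum_window_sumR.
  replace (2 * N + 2)%nat with (1 + (2 * N - 1) + 2)%nat by lia.
  rewrite !seq_app, !sumR_app.
  rewrite (sumR_ext _ (fun _ => 0) (seq (0 + 1) _)), sumR_const0
    by (intros k Hk%in_seq; apply Hin; lia).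
  replace (0 + (1 + (2 * N - 1)))%nat with (2 * N)%nat by lia.
  change (seq 0 1) with [0%nat]. change (seq (2 * N) 2) with [2 * N; S (2 * N)]%nat.
  rewrite !sumR_cons, !sumR_nil.
  replace (Z.of_nat 0 - Z.of_nat N - 1)%Z with (- Z.of_nat N - 1)%Z by lia.
  replace (Z.of_nat (2 * N) - Z.of_nat N - 1)%Z with (Z.of_nat N - 1)%Z by lia.
  replace (Z.of_nat (S (2 * N)) - Z.of_nat N - 1)%Z with (Z.of_nat N) by lia.
  ring.
Qed.

Lemma U0_partial_sum_le_succ (g : config -> R) N : (forall x, in_U0 x -> 0 <= g x) ->
  U0_partial_sum N g <= U0_partial_sum (S N) g.
Proof.
  intros Hg. rewrite !U0_partial_sum_window.
  apply sumR_incl_le; [apply window_list_NoDup|apply window_list_incl|].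
  intros x Hx%In_window_list. apply Hg, Hx.
Qed.

Definition mass_outside (P : R -> config -> R) (N : nat) (u : R) : R :=
  1 - U0_partial_sum N (P u).

Definition overlap (P : R -> config -> R) (t : R) (N : nat) (s : R) : R :=
  sumR (fun x => P s x * P (t - s) x) (window_list N).

Definition bond_flux (P : R -> config -> R) (t : R) (N : nat) (s : R) (z : Z) : R :=
  sumR (fun x => pair_rate (1/2) x z *
                 (P s (swap x z) * P (t - s) x - P s x * P (t - s) (swap x z)))
    (window_list N).

Lemma bond_flux_interior P t N s z : (- Z.of_nat N <= z <= Z.of_nat N - 2)%Z ->
  bond_flux P t N s z = 0.
Proof.
  intros Hz. unfold bond_flux.
  set (h := fun x => pair_rate (1/2) x z *
                     (P s (swap x z) * P (t - s) x - P s x * P (t - s) (swap x z))).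
  assert (Hanti : sumR (fun x => h (swap x z)) (window_list N) = - sumR h (window_list N)).
  { rewrite <- sumR_opp. apply sumR_ext. intros x _. unfold h.
    rewrite pair_rate_half_swap, swap_involutive. ring. }
  rewrite sumR_involution in Hanti.
  - lra.
  - apply window_list_NoDup.
  - intros x. apply swap_involutive.
  - intros x. apply swap_in_window, Hz.
Qed.

Lemma bond_flux_outer P t N s : bond_flux P t N s (Z.of_nat N) = 0.
Proof.
  unfold bond_flux. rewrite <- (sumR_const0 (window_list N)).
  apply sumR_ext. intros x Hx. apply In_window_list in Hx as [A _].
  rewrite pair_rate_half. unfold exchangeable.
  rewrite !A by lia. unfold O_cfg.
  replace (Z.of_nat N <? 0)%Z with false by (symmetry; apply Z.ltb_ge; lia).
  replace (Z.of_nat N + 1 <? 0)%Z with false by (symmetry; apply Z.ltb_ge; lia).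
  cbn. ring.
Qed.

Lemma exchange_leaves_window N x z :
  (z = - Z.of_nat N - 1 \/ z = Z.of_nat N - 1)%Z ->
  In x (window_list N) -> exchangeable x z = true ->
  In (swap x z) (window_list (S N)) /\ ~ In (swap x z) (window_list N).
Proof.
  intros Hz Hx Hex. split.
  - apply swap_in_window; [lia|]. apply window_list_incl, Hx.
  - intros Hsw. apply In_window_list in Hsw as [Asw _]. apply In_window_list in Hx as [A _].
    unfold exchangeable in Hex. destruct Hz as [Hz|Hz]; subst z.
    + rewrite (A (- Z.of_nat N - 1)%Z), <- swap_left, Asw in Hex by lia.
      now destruct (O_cfg _).
    + rewrite (A (Z.of_nat N - 1 + 1)%Z), <- (swap_right x), Asw in Hex by lia.
      now destruct (O_cfg _).
Qed.

Lemma square_difference_bound a b c d :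
  0 <= a <= 1 -> 0 <= b <= 1 -> 0 <= c <= 1 -> 0 <= d <= 1 -> Rabs (a * d - b * c) <= a + c.
Proof. intros. unfold Rabs. destruct (Rcase_abs _); nra. Qed.

Section HalfMarginals.

Variable P : R -> config -> R.
Hypothesis HP : exclusion_marginals_from_O (1/2) P.

Lemma P_nonneg u x : 0 <= u -> in_U0 x -> 0 <= P u x.
Proof. destruct HP as (_ & _ & Hnn & _). auto. Qed.

Lemma U0_partial_sum_le_1 N u : 0 <= u -> U0_partial_sum N (P u) <= 1.
Proof.
  intros Hu. destruct HP as (_ & _ & _ & Hsum & _).
  apply (growing_ineq (fun N => U0_partial_sum N (P u))); [|exact (Hsum u Hu)].
  intros n. apply U0_partial_sum_le_succ. intros x. apply P_nonneg, Hu.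
Qed.

Lemma P_bounds u x : 0 <= u -> in_U0 x -> 0 <= P u x <= 1.
Proof.
  intros Hu Hx. split; [apply P_nonneg; assumption|].
  destruct Hx as [N [A E]]. apply Rle_trans with (U0_partial_sum N (P u));
    [|apply U0_partial_sum_le_1, Hu].
  rewrite U0_partial_sum_window.
  assert (Hin : In x (window_list N)) by (apply In_window_list; split; [|exists N]; auto).
  rewrite <- (Rplus_0_r (P u x)), <- (sumR_nil (P u)), <- sumR_cons.
  apply sumR_incl_le; [repeat constructor; auto|intros y [<-|[]]; exact Hin|].
  intros y Hy%In_window_list. apply P_nonneg, Hy. exact Hu.
Qed.

Lemma escaping_mass_le N u L : 0 <= u -> NoDup L ->
  (forall y, In y L -> In y (window_list (S N)) /\ ~ In y (window_list N)) ->
  sumR (P u) L <= mass_outside P N u.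
Proof.
  intros Hu ND HL. unfold mass_outside.
  enough (U0_partial_sum N (P u) + sumR (P u) L <= 1) by lra.
  apply Rle_trans with (U0_partial_sum (S N) (P u)); [|apply U0_partial_sum_le_1, Hu].
  rewrite !U0_partial_sum_window, <- sumR_app. apply sumR_incl_le.
  - apply NoDup_app; [apply window_list_NoDup|exact ND|].
    intros y Hy HyL. exact (proj2 (HL y HyL) Hy).
  - intros y Hy. apply in_app_iff in Hy as [Hy|Hy]; [apply window_list_incl, Hy|apply HL, Hy].
  - intros y Hy%In_window_list. apply P_nonneg, Hy. exact Hu.
Qed.

Lemma bond_flux_boundary_bound t N s z : 0 <= s <= t ->
  (z = - Z.of_nat N - 1 \/ z = Z.of_nat N - 1)%Z ->
  Rabs (bond_flux P t N s z) <= 1 / 2 * (mass_outside P N s + mass_outside P N (t - s)).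
Proof.
  intros Hs Hz. set (E := filter (fun x => exchangeable x z) (window_list N)).
  set (L := map (fun x => swap x z) E).
  assert (HL : forall y, In y L -> In y (window_list (S N)) /\ ~ In y (window_list N)).
  { intros y Hy. apply in_map_iff in Hy as [x [<- Hx]]. apply filter_In in Hx as [Hx Hex].
    apply exchange_leaves_window; assumption. }
  assert (NDL : NoDup L).
  { apply Injective_map_NoDup; [|apply NoDup_filter, window_list_NoDup].
    intros x y Exy. now rewrite <- (swap_involutive x z), Exy, swap_involutive. }
  unfold bond_flux. eapply Rle_trans; [apply sumR_abs_le|].
  apply Rle_trans with
    (sumR (fun x => if exchangeable x z
                    then 1 / 2 * P s (swap x z) + 1 / 2 * P (t - s) (swap x z) else 0)
       (window_list N)).
  - apply sumR_le. intros x Hx. rewrite pair_rate_half.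
    destruct (exchangeable x z) eqn:Hex; [|rewrite Rmult_0_l, Rabs_R0; lra].
    destruct (exchange_leaves_window N x z Hz Hx Hex) as [Hy _].
    apply In_window_list in Hy as [_ Hy]. apply In_window_list in Hx as [_ Hx].
    rewrite Rabs_mult, Rabs_right, <- Rmult_plus_distr_l by lra.
    apply Rmult_le_compat_l; [lra|].
    apply square_difference_bound; apply P_bounds; auto; lra.
  - rewrite sumR_filter. fold E.
    rewrite sumR_linear, <- !(sumR_map _ (fun x => swap x z)). fold L.
    pose proof (escaping_mass_le N s L (proj1 Hs) NDL HL).
    pose proof (escaping_mass_le N (t - s) L ltac:(lra) NDL HL). lra.
Qed.

Lemma flux_total_bound t N s : (1 <= N)%nat -> 0 <= s <= t ->
  Rabs (sum_window N (bond_flux P t N s)) <= mass_outside P N s + mass_outside P N (t - s).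
Proof.
  intros HN Hs. rewrite sum_window_boundary, bond_flux_outer, Rplus_0_r
    by (assumption || apply bond_flux_interior).
  pose proof (bond_flux_boundary_bound t N s _ Hs (or_introl eq_refl)).
  pose proof (bond_flux_boundary_bound t N s _ Hs (or_intror eq_refl)).
  eapply Rle_trans; [apply Rabs_triang|]. lra.
Qed.

(* The forward equation for both factors, regrouped bond by bond. *)
Lemma overlap_derivative t N s : 0 < s < t ->
  derivable_pt_lim (overlap P t N) s (sum_window N (bond_flux P t N s)).
Proof.
  intros Hs. destruct HP as (_ & _ & _ & _ & _ & Hder).
  replace (sum_window N (bond_flux P t N s)) with (sumR (fun x =>
      forward_rhs (1/2) P s x N * P (t - s) x + P s x * (forward_rhs (1/2) P (t - s) x N * -1))
      (window_list N)).
  - apply sumR_derivable. intros x Hx. apply In_window_list in Hx as [A U].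
    apply (derivable_pt_lim_mult (fun s => P s x) (fun s => P (t - s) x)); [apply Hder; auto; lra|].
    apply (derivable_pt_lim_comp (fun s => t - s) (fun u => P u x)); [|apply Hder; auto; lra].
    replace (-1) with (0 - 1) by ring.
    apply derivable_pt_lim_minus; [apply derivable_pt_lim_const|apply derivable_pt_lim_id].
  - unfold bond_flux. rewrite sum_window_sumR, sumR_exchange. apply sumR_ext. intros x _.
    rewrite !forward_rhs_half, !sum_window_sumR.
    match goal with |- sumR ?f ?l * ?q + ?p * (sumR ?g _ * -1) = _ =>
      transitivity (sumR (fun k => q * f k + - p * g k) l) end.
    + rewrite sumR_linear. ring.
    + apply sumR_ext. intros k _. ring.
Qed.

Lemma overlap_at_0 t N : overlap P t N 0 = P t O_cfg.
Proof.
  destruct HP as (HO & Hzero & _). unfold overlap.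
  rewrite (sumR_single _ _ O_cfg (window_list_NoDup N) (O_in_window_list N)).
  - rewrite HO, Rminus_0_r. ring.
  - intros x Hx Hne. apply In_window_list in Hx as [_ U]. rewrite Hzero by assumption. ring.
Qed.

Lemma overlap_at_half t N :
  overlap P t N (t / 2) = U0_partial_sum N (fun x => P (t / 2) x ^ 2).
Proof.
  unfold overlap. rewrite U0_partial_sum_window. replace (t - t / 2) with (t / 2) by field.
  apply sumR_ext. intros x _. ring.
Qed.

Lemma P_continuity_pt x y : in_U0 x -> 0 < y -> continuity_pt (fun u => P u x) y.
Proof.
  intros Ux Hy. destruct HP as (_ & _ & _ & _ & _ & Hder). pose proof Ux as [N [A _]].
  apply derivable_continuous_pt. exists (forward_rhs (1/2) P y x N). apply Hder; assumption.
Qed.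

Lemma P_continue_in t x y : in_U0 x -> 0 <= y <= t ->
  continue_in (fun u => P u x) (fun v => 0 <= v <= t) y.
Proof.
  intros Ux Hy. destruct (Rle_lt_or_eq_dec 0 y (proj1 Hy)) as [Hpos|<-].
  - apply (continue_in_subdomain _ no_cond); [intros; exact I|]. apply P_continuity_pt; assumption.
  - destruct HP as (_ & _ & _ & _ & Hright & _).
    intros eps Heps. destruct (Hright x Ux eps Heps) as [d [Hd H]]. exists d. split; [exact Hd|].
    intros v [[Hv _] Hdist]. cbn in *. unfold R_dist in *.
    rewrite Rminus_0_r, Rabs_right in Hdist by lra. apply H. lra.
Qed.

Lemma mass_outside_continue_in t N y : 0 <= y <= t ->
  continue_in (mass_outside P N) (fun v => 0 <= v <= t) y.
Proof.
  intros Hy. apply (limit_minus (fun _ => 1) (fun u => U0_partial_sum N (P u))).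
  - intros eps Heps. exists 1. split; [lra|]. intros v _. rewrite R_dist_eq. exact Heps.
  - apply (continue_in_sumR (fun l u => P u (cfg_of N l))). intros l Hl.
    apply P_continue_in; [|exact Hy].
    apply (In_window_list N), in_map, Hl.
Qed.

Lemma overlap_continue_in_0 t N : 0 < t ->
  continue_in (overlap P t N) (fun v => 0 <= v <= t) 0.
Proof.
  intros Ht. apply (continue_in_sumR (fun x s => P s x * P (t - s) x)). intros x Hx.
  apply In_window_list in Hx as [_ U].
  apply (limit_mul (fun s => P s x) (fun s => P (t - s) x)); [apply P_continue_in; auto; lra|].
  change (continue_in (fun s => P (t - s) x) (fun v => 0 <= v <= t) 0).
  apply (continue_in_subdomain _ no_cond); [intros; exact I|].
  change (continuity_pt (comp (fun u => P u x) (fun s => t - s)) 0).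
  apply continuity_pt_comp.
  - apply continuity_pt_minus; [apply continuity_pt_const; intros ??; reflexivity|].
    apply derivable_continuous_pt, derivable_pt_id.
  - apply P_continuity_pt; [exact U|lra].
Qed.

Lemma mass_outside_uniformly_small t : 0 <= t -> forall eta, 0 < eta ->
  exists n0, forall N u, (n0 <= N)%nat -> 0 <= u <= t -> mass_outside P N u < eta.
Proof.
  intros Ht. destruct HP as (_ & _ & _ & Hsum & _). apply dini_uniform.
  - intros N u Hu. unfold mass_outside.
    pose proof (U0_partial_sum_le_succ (P u) N (fun x => P_nonneg u x (proj1 Hu))). lra.
  - intros u Hu eps Heps. destruct (Hsum u (proj1 Hu) eps Heps) as [n0 Hn0].
    exists n0. intros n Hn. unfold R_dist, mass_outside in *.
    rewrite <- Rabs_Ropp. replace (- (1 - U0_partial_sum n (P u) - 0)) with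
      (U0_partial_sum n (P u) - 1) by ring. apply Hn0, Hn.
  - intros N y Hy. apply mass_outside_continue_in, Hy.
Qed.

Lemma overlap_increment_bound t N eta a b : (1 <= N)%nat -> 0 < a < b -> b < t ->
  (forall u, 0 <= u <= t -> mass_outside P N u <= eta) ->
  Rabs (overlap P t N b - overlap P t N a) <= 2 * eta * (b - a).
Proof.
  intros HN Hab Hbt Heta.
  destruct (MVT_cor2 (overlap P t N) (fun s => sum_window N (bond_flux P t N s)) a b)
    as [c [Hc Hcab]]; [lra|intros c Hc; apply overlap_derivative; lra|].
  rewrite Hc, Rabs_mult, (Rabs_right (b - a)) by lra. apply Rmult_le_compat_r; [lra|].
  eapply Rle_trans; [apply flux_total_bound; [assumption|lra]|].
  pose proof (Heta c ltac:(lra)). pose proof (Heta (t - c) ltac:(lra)). lra.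
Qed.

Lemma overlap_half_minus_0_small t : 0 < t -> forall eps, 0 < eps ->
  exists n0, forall N, (n0 <= N)%nat -> Rabs (overlap P t N (t / 2) - overlap P t N 0) < eps.
Proof.
  intros Ht eps Heps. set (eta := eps / (2 * t)).
  destruct (mass_outside_uniformly_small t (Rlt_le _ _ Ht) eta) as [n0 Hn0];
    [apply Rdiv_lt_0_compat; lra|].
  exists (S n0). intros N HN.
  destruct (overlap_continue_in_0 t N Ht (eps / 2)) as [alp [Halp Hnear]]; [lra|].
  set (a := Rmin (alp / 2) (t / 4)).
  assert (Ha : 0 < a <= alp / 2 /\ a <= t / 4)
    by (unfold a; split; [split; [apply Rmin_pos; lra|apply Rmin_l]|apply Rmin_r]).
  assert (Hclose : Rabs (overlap P t N a - overlap P t N 0) < eps / 2).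
  { apply (Hnear a). cbn. unfold R_dist. rewrite Rminus_0_r, Rabs_right by lra.
    repeat split; lra. }
  assert (Hinc : Rabs (overlap P t N (t / 2) - overlap P t N a) <= 2 * eta * (t / 2 - a)).
  { apply overlap_increment_bound; [lia|lra|lra|]. intros u Hu. apply Rlt_le, Hn0; [lia|exact Hu]. }
  assert (Heta : 2 * eta * (t / 2) = eps / 2) by (unfold eta; field; lra).
  replace (overlap P t N (t / 2) - overlap P t N 0) with
    ((overlap P t N (t / 2) - overlap P t N a) + (overlap P t N a - overlap P t N 0)) by ring.
  eapply Rle_lt_trans; [apply Rabs_triang|].
  assert (0 < eta) by (unfold eta; apply Rdiv_lt_0_compat; lra). nra.
Qed.

End HalfMarginals.

Theorem lemma3p1 (p : R) (P : R -> config -> R) :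
  p = 1 / 2 ->
  exclusion_marginals_from_O p P ->
  forall t : R, 0 <= t ->
    Un_cv (fun N => U0_partial_sum N (fun x => (P (t / 2) x) ^ 2)) (P t O_cfg).
Proof.
  intros -> HP t Ht eps Heps. unfold R_dist.
  destruct (Rle_lt_or_eq_dec 0 t Ht) as [Htpos|<-].
  - destruct (overlap_half_minus_0_small P HP t Htpos eps Heps) as [n0 Hn0].
    exists n0. intros N HN.
    rewrite <- overlap_at_half, <- (overlap_at_0 P HP t N). apply Hn0, HN.
  - exists 0%nat. intros N _.
    rewrite <- overlap_at_half, <- (overlap_at_0 P HP 0 N), Rdiv_0_l, Rminus_diag, Rabs_R0.
    exact Heps.
Qed.
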